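(* Let $I\subsetneq\Delta_\sigma$ be $\lambda_\iota$-connected. Then $I_\iota(I)$ is $\lambda_\iota$-connected. More generally, every $J\subset\Delta_\sigma$ with $J\supset I_\iota(I)$ is $\lambda_\iota$-connected.
   Context: Setting. - $G$ is a connected noncompact semisimple real Lie group with finite center, $\iota:G\to\mathrm{GL}(W)$ is an almost faithful finite-dimensional real representation irreducible over $\mathbb R$, $\sigma$ an involution of $G$, and $H$ a symmetric subgroup for $\sigma$ fixing a nonzero $v_0\in W$. - $\theta$ is a Cartan involution commuting with $\sigma$, $\mathfrak g=\mathfrak k\oplus\mathfrak p=\mathfrak h\oplus\mathfrak q$ the eigenspace decompositions, and $\mathfrak a$ a maximal abelian subspace of $\mathfrak p\cap\mathfrak q$. - $\Sigma_\sigma$ is the restricted root system with root spaces $\mathfrak g_\alpha$, positive roots $\Sigma^+_\sigma$ and simple roots $\Delta_\sigma$. - $2\rho=\sum_{\alpha\in\Sigma_\sigma^+}(\dim\mathfrak g_\alpha)\alpha=\sum_{\alpha\in\Delta_\sigma}u_\alpha\alpha$, and $\lambda_\iota=\sum_{\alpha\in\Delta_\sigma}m_\alpha\alpha$ is the highest weight of $\mathfrak a$ on $W$ (all $u_\alpha,m_\alpha>0$). - $I\subset\Delta_\sigma$ is $\lambda_\iota$-connected if $I\cup\{\lambda_\iota\}$ is not a union of two nonempty subsets orthogonal for the Killing form. - For $\lambda_\iota$-connected $I\subsetneq\Delta_\sigma$: $a_\iota(I)=\max\{u_\alpha/m_\alpha:\alpha\in\Delta_\sigma\setminus I\}$ and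 $I_\iota(I)=I\cup\{\alpha\in\Delta_\sigma\setminus I:u_\alpha/m_\alpha<a_\iota(I)\}$. *)

From HB Require Import structures.
From mathcomp Require Import all_boot all_order all_algebra.
Set Implicit Arguments. Unset Strict Implicit. Unset Printing Implicit Defensive.
Import Order.TTheory GRing.Theory Num.Theory.
Local Open Scope ring_scope.

Section Defs.
Variables (R : realFieldType) (n r : nat).

(* the (positive definite) inner product on a^* induced by the Killing form,
   written in an orthonormal basis *)
Definition dot (x y : 'rV[R]_n) : R := (x *m y^T) 0 0.

Definition refl (a b : 'rV[R]_n) : 'rV[R]_n :=
  b - ((2 * dot b a) / dot a a) *: a.

(* a (possibly non-reduced) crystallographic root system *)
Definition is_root_system (S : seq 'rV[R]_n) : Prop :=
  [/\ uniq S, (0 : 'rV[R]_n) \notin S,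
      (forall a b, a \in S -> b \in S -> refl a b \in S) &
      (forall a b, a \in S -> b \in S ->
         exists k : int, (2 * dot b a) / dot a a = k%:~R)].

Definition is_base (S : seq 'rV[R]_n) (Delta : 'I_r -> 'rV[R]_n) : Prop :=
  [/\ (forall i, Delta i \in S),
      row_free (\matrix_(i < r) Delta i) &
      (forall b, b \in S -> exists c : 'I_r -> int,
          b = \sum_i (c i)%:~R *: Delta i /\
          ((forall i, 0 <= c i) \/ (forall i, c i <= 0)))].

Definition is_positive_system (S Splus : seq 'rV[R]_n)
    (Delta : 'I_r -> 'rV[R]_n) : Prop :=
  uniq Splus /\
  forall b, b \in Splus <->
    (b \in S /\ exists c : 'I_r -> R,
        (forall i, 0 <= c i) /\ b = \sum_i c i *: Delta i).

Definition lam_connected (Delta : 'I_r -> 'rV[R]_n) (lam : 'rV[R]_n)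
    (J : {set 'I_r}) : Prop :=
  let X := fun v => v = lam \/ exists2 i, i \in J & v = Delta i in
  ~ (exists A B : 'rV[R]_n -> Prop,
       [/\ (exists x, A x), (exists y, B y),
           (forall v, X v <-> (A v \/ B v)) &
           (forall a b, A a -> B b -> dot a b = 0)]).

(* a_iota(I) = max { u_a / m_a : a in Delta \ I }  (all ratios are > 0, and
   the index set is nonempty when I is a proper subset) *)
Definition a_iota (u m : 'I_r -> R) (I : {set 'I_r}) : R :=
  \big[Num.max/0]_(i | i \notin I) (u i / m i).

Definition I_iota (u m : 'I_r -> R) (I : {set 'I_r}) : {set 'I_r} :=
  I :|: [set i | (i \notin I) && (u i / m i < a_iota u m I)].

End Defs.

From HB Require Import structures.
From mathcomp Require Import all_boot all_order all_algebra.
From mathcomp Require Import lra boolp.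
Import Order.TTheory GRing.Theory Num.Theory.
Local Open Scope ring_scope.

(* If J ⊇ I_ι(I) were not λ-connected, some nonempty C ⊆ J would satisfy
   Δ(C) ⊥ λ and Δ(C) ⊥ Δ(J \ C). Restricting to I and using that I is
   λ-connected, C misses I; hence u_j <= a m_j on C for a = a_ι(I), whereas
   u_j >= a m_j off J because J contains I_ι(I). Put e_j = a m_j - u_j >= 0 on
   C, e_j = 0 elsewhere, and D = Σ e_j Δ_j. As distinct simple roots make
   obtuse angles, ⟨2ρ, Δ_i⟩ <= ⟨a λ - D, Δ_i⟩ = -⟨D, Δ_i⟩ for i ∈ C, and
   pairing with e gives 0 <= -⟨D, D⟩. So D = 0 and ⟨2ρ, Δ_i⟩ <= 0 on C, which
   contradicts ⟨2ρ, Δ_i⟩ > 0: the simple reflection s_i permutes, preserving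
   multiplicities, the positive roots not proportional to Δ_i and negates their
   pairing with Δ_i, so only the positive multiples of Δ_i contribute. *)

Section InnerProduct.
Context {R : realFieldType} {n : nat}.
Implicit Types (x y z : 'rV[R]_n).

Lemma dotE x y : dot x y = \sum_k x 0 k * y 0 k.
Proof. by rewrite /dot mxE; apply: eq_bigr => k _; rewrite mxE. Qed.

Lemma dotC x y : dot x y = dot y x.
Proof. by rewrite !dotE; apply: eq_bigr => k _; rewrite mulrC. Qed.

Lemma dotDl x y z : dot (x + y) z = dot x z + dot y z.
Proof. by rewrite /dot mulmxDl mxE. Qed.

Lemma dotZl (a : R) x y : dot (a *: x) y = a * dot x y.
Proof. by rewrite /dot -scalemxAl mxE. Qed.

Lemma dotBl x y z : dot (x - y) z = dot x z - dot y z.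
Proof. by rewrite dotDl -scaleN1r dotZl mulN1r. Qed.

Lemma dot0l y : dot 0 y = 0.
Proof. by rewrite /dot mul0mx mxE. Qed.

Lemma dotZr (a : R) x y : dot y (a *: x) = a * dot y x.
Proof. by rewrite !(dotC y) dotZl. Qed.

Lemma dot_suml (I : Type) (s : seq I) (P : pred I) (F : I -> 'rV[R]_n) y :
  dot (\sum_(i <- s | P i) F i) y = \sum_(i <- s | P i) dot (F i) y.
Proof. by rewrite /dot mulmx_suml summxE. Qed.

Lemma dot_sumr (I : Type) (s : seq I) (P : pred I) (F : I -> 'rV[R]_n) y :
  dot y (\sum_(i <- s | P i) F i) = \sum_(i <- s | P i) dot y (F i).
Proof. by rewrite dotC dot_suml; apply: eq_bigr => i _; rewrite dotC. Qed.

Lemma dotxx_ge0 x : 0 <= dot x x.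
Proof. by rewrite dotE; apply: sumr_ge0 => k _; rewrite -expr2 sqr_ge0. Qed.

Lemma dotxx_eq0 x : (dot x x == 0) = (x == 0).
Proof.
apply/idP/eqP => [|->]; last by rewrite dot0l.
rewrite dotE psumr_eq0 => [/allP x0|k _]; last by rewrite -expr2 sqr_ge0.
apply/rowP => k; rewrite mxE; apply/eqP.
by have := x0 k (mem_index_enum k); rewrite mulf_eq0 orbb.
Qed.

Lemma dotxx_gt0 x : x != 0 -> 0 < dot x x.
Proof. by rewrite lt_def dotxx_ge0 dotxx_eq0 andbT. Qed.

Lemma refl_dot x y : y != 0 -> dot (refl y x) y = - dot x y.
Proof.
move=> /dotxx_gt0 /lt0r_neq0 yy0.
by rewrite /refl dotBl dotZl -mulrA mulVf // mulr1; lra.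
Qed.

Lemma reflK y : y != 0 -> involutive (refl y).
Proof.
move=> y0 x; rewrite {1}/refl refl_dot // mulrN mulNr scaleNr opprK.
by rewrite /refl subrK.
Qed.

Lemma refl_scale y (t : R) : y != 0 -> refl y (t *: y) = - t *: y.
Proof.
move=> /dotxx_gt0 /lt0r_neq0 yy0.
rewrite /refl dotZl mulrA -mulrA mulfV // mulr1 -scalerBl.
by congr (_ *: _); lra.
Qed.

End InnerProduct.

Section Coordinates.
Context {R : realFieldType} {n r : nat} {Delta : 'I_r -> 'rV[R]_n}.

Lemma sum_scale_delta (i : 'I_r) (t : R) :
  \sum_l (t * (l == i)%:R) *: Delta l = t *: Delta i.
Proof.
rewrite (bigD1 i) //= eqxx mulr1 big1 ?addr0 // => l /negPf ->.
by rewrite mulr0 scale0r.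
Qed.

Lemma sum_coef_subr (c : 'I_r -> R) (i : 'I_r) (t : R) :
  \sum_l (c l - t * (l == i)%:R) *: Delta l = \sum_l c l *: Delta l - t *: Delta i.
Proof. by rewrite -sum_scale_delta -sumrB; apply: eq_bigr => l _; rewrite scalerBl. Qed.

Lemma coef_support_delta (a : 'rV[R]_n) (c : 'I_r -> R) (i : 'I_r) :
  a = \sum_l c l *: Delta l -> ~~ (a <= Delta i)%MS ->
  exists2 j, j != i & c j != 0.
Proof.
move=> -> notprop; apply/exists_inP; apply: contraR notprop => /exists_inPn c0.
apply/sub_rVP; exists (c i); rewrite (bigD1 i) //= big1 ?addr0 // => j /c0.
by rewrite negbK => /eqP ->; rewrite scale0r.
Qed.

Hypothesis Delta_free : row_free (\matrix_(i < r) Delta i).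

Lemma coef_inj (c c' : 'I_r -> R) :
  \sum_i c i *: Delta i = \sum_i c' i *: Delta i -> c =1 c'.
Proof.
have combE d : (\row_i d i) *m (\matrix_(i < r) Delta i) = \sum_i d i *: Delta i.
  by rewrite mulmx_sum_row; apply: eq_bigr => i _; rewrite rowK mxE.
move=> E k; move: (combE c); rewrite E -combE => /(row_free_inj Delta_free).
by move=> /rowP /(_ k); rewrite !mxE.
Qed.

Lemma sum_coef_neq0 (c : 'I_r -> R) k : c k != 0 -> \sum_i c i *: Delta i != 0.
Proof.
apply: contraNneq => c0; rewrite (coef_inj c (fun=> 0)) //.
by rewrite c0 big1 // => i _; rewrite scale0r.
Qed.

End Coordinates.

Lemma sum_odd_involution {T : eqType} {R : numDomainType} (s : T -> T)
    (f : T -> R) (L : seq T) :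
  uniq L -> injective s -> {in L, forall x, s x \in L} ->
  {in L, forall x, f (s x) = - f x} -> \sum_(x <- L) f x = 0.
Proof.
move=> Lu s_inj sL fs.
have sLu : uniq (map s L) by rewrite map_inj_uniq.
have sLsub : {subset map s L <= L} by move=> _ /mapP[x xL ->]; apply: sL.
have [_ sLL] := uniq_min_size sLu sLsub (eq_leq (esym (size_map s L))).
apply/eqP; suff: (\sum_(x <- L) f x) *+ 2 == 0 by rewrite mulrn_eq0.
rewrite mulr2n.
rewrite -[X in X + _ == _](perm_big _ (uniq_perm sLu Lu sLL)) big_map -big_split.
by rewrite big1_seq // => x /andP[_ xL]; rewrite /= fs // addNr.
Qed.

Section SimpleRoots.
Context {R : realFieldType} {n r : nat} {Sigma Splus : seq 'rV[R]_n}
  {Delta : 'I_r -> 'rV[R]_n}.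
Hypotheses (Sigma_roots : is_root_system Sigma) (Delta_base : is_base Sigma Delta)
  (Splus_pos : is_positive_system Sigma Splus Delta).

Let Delta_free : row_free (\matrix_(i < r) Delta i).
Proof. by case: Delta_base. Qed.

Lemma Delta_neq0 i : Delta i != 0.
Proof.
case: Sigma_roots => _ Sigma0 _ _; case: Delta_base => DeltaS _ _.
by apply: contraNneq Sigma0 => <-.
Qed.

Lemma pos_root_coef_ge0 b (c : 'I_r -> R) :
  b \in Splus -> b = \sum_l c l *: Delta l -> forall l, 0 <= c l.
Proof.
case: Splus_pos => _ /[apply] -[_ [c' [c'0 ->]]] /(coef_inj Delta_free) c'c l.
by rewrite -c'c.
Qed.

Lemma root_coef_gt0_pos b (c : 'I_r -> R) j :
  b \in Sigma -> b = \sum_l c l *: Delta l -> 0 < c j -> b \in Splus.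
Proof.
move=> bS bE cj0; case: Delta_base => _ _ /(_ b bS) [e [eE e_sign]].
have ce : (fun l => (e l)%:~R) =1 c by apply: (coef_inj Delta_free); rewrite -bE eE.
have e0 l : 0 <= c l.
  rewrite -ce ler0z; case: e_sign => // e_le0.
  by move: cj0; rewrite -ce ltr0z ltNge e_le0.
by case: Splus_pos => _ ->; split=> //; exists c.
Qed.

Lemma Delta_pos i : Delta i \in Splus.
Proof.
case: Delta_base => DeltaS _ _.
apply: (root_coef_gt0_pos _ (fun l => 1 * (l == i)%:R) i) => //.
  by rewrite sum_scale_delta scale1r.
by rewrite eqxx mulr1 ltr01.
Qed.

Lemma dot_Delta_le0 i j : i != j -> dot (Delta j) (Delta i) <= 0.
Proof.
move=> ij; case: Sigma_roots => _ _ reflS _; case: Delta_base => DeltaS _ _.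
set k := 2 * dot (Delta j) (Delta i) / dot (Delta i) (Delta i).
pose c l := 1 * (l == j)%:R - k * (l == i)%:R.
have sE : refl (Delta i) (Delta j) = \sum_l c l *: Delta l.
  by rewrite sum_coef_subr sum_scale_delta scale1r.
have sPos : refl (Delta i) (Delta j) \in Splus.
  apply: (root_coef_gt0_pos _ _ j _ sE); first exact: reflS.
  by rewrite /c eqxx eq_sym (negPf ij) mulr0 subr0 mulr1 ltr01.
have := pos_root_coef_ge0 _ _ sPos sE i.
rewrite /c eqxx (negPf ij) mulr1 mulr0 sub0r oppr_ge0 /k.
by rewrite pmulr_lle0 ?invr_gt0 ?dotxx_gt0 ?Delta_neq0 // pmulr_rle0.
Qed.

Lemma refl_Delta_pos i a :
  a \in Splus -> ~~ (a <= Delta i)%MS ->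
  refl (Delta i) a \in Splus /\ ~~ (refl (Delta i) a <= Delta i)%MS.
Proof.
move=> aPos notprop; case: Sigma_roots => _ _ reflS _; case: Delta_base => DeltaS _ _.
have [aS [c [c0 aE]]] := (Splus_pos.2 a).1 aPos.
have [j ji cj] := coef_support_delta _ _ _ aE notprop.
set k := 2 * dot a (Delta i) / dot (Delta i) (Delta i).
have sE : refl (Delta i) a = \sum_l (c l - k * (l == i)%:R) *: Delta l.
  by rewrite sum_coef_subr -aE.
split.
  apply: (root_coef_gt0_pos _ _ j _ sE); first exact: reflS.
  by rewrite (negPf ji) mulr0 subr0 lt_def cj c0.
apply: contra notprop => /sub_rVP [t st].
apply/sub_rVP; exists (- t).
by rewrite -(reflK _ (Delta_neq0 i) a) st refl_scale ?Delta_neq0.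
Qed.

Context {mult : 'rV[R]_n -> nat}.
Hypotheses (mult_gt0 : forall a, a \in Sigma -> (0 < mult a)%N)
  (mult_refl : forall a b, a \in Sigma -> b \in Sigma -> mult (refl a b) = mult b).

Lemma dot_rho_Delta_gt0 i :
  0 < dot (\sum_(a <- Splus) (mult a)%:R *: a) (Delta i).
Proof.
have [Splus_uniq Splus_def] := Splus_pos.
case: Delta_base => DeltaS _ _.
rewrite dot_suml; under eq_bigr => a _ do rewrite dotZl.
pose prop (a : 'rV[R]_n) := (a <= Delta i)%MS.
rewrite -(perm_big _ (permEl (perm_filterC prop Splus))) big_cat.
have -> : \sum_(a <- [seq a <- Splus | predC prop a])
            (mult a)%:R * dot a (Delta i) = 0.
  apply: (sum_odd_involution (refl (Delta i))).
  - exact: filter_uniq.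
  - exact: inv_inj (reflK _ (Delta_neq0 i)).
  - move=> a; rewrite !mem_filter => /andP[np aP].
    by have [sP snp] := refl_Delta_pos i a aP np; apply/andP.
  - move=> a; rewrite mem_filter => /andP[_ /Splus_def [aS _]].
    by rewrite mult_refl // refl_dot ?Delta_neq0 // mulrN.
have DeltaL : Delta i \in [seq a <- Splus | prop a].
  by rewrite mem_filter Delta_pos andbT; exact: submx_refl.
rewrite Monoid.mulm1 (bigD1_seq _ DeltaL) ?filter_uniq //.
apply: ltr_wpDr.
  rewrite big_seq_cond; apply: sumr_ge0 => a /andP[].
  rewrite mem_filter => /andP[/sub_rVP[t aE] aP] _.
  have t0 : 0 <= t.
    have aE' : a = \sum_l (t * (l == i)%:R) *: Delta l by rewrite sum_scale_delta.
    by have := pos_root_coef_ge0 _ _ aP aE' i; rewrite eqxx mulr1.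
  by rewrite aE dotZl mulr_ge0 ?mulr_ge0 ?dotxx_ge0.
by rewrite mulr_gt0 ?ltr0n ?mult_gt0 ?dotxx_gt0 ?Delta_neq0.
Qed.

End SimpleRoots.

(* The [Delta i] with [i \in C] form the piece not containing [lam] of a
   splitting of J ∪ {lam} into two mutually orthogonal pieces. *)
Definition lam_orth_part {R : realFieldType} {n r : nat}
    (Delta : 'I_r -> 'rV[R]_n) (lam : 'rV[R]_n) (J C : {set 'I_r}) : Prop :=
  [/\ C \subset J, forall i, i \in C -> dot lam (Delta i) = 0
    & forall i j, i \in C -> j \in J :\: C -> dot (Delta j) (Delta i) = 0].

Section OrthogonalParts.
Context {R : realFieldType} {n r : nat} {Delta : 'I_r -> 'rV[R]_n} {lam : 'rV[R]_n}.

Lemma lam_orth_partI {I J C : {set 'I_r}} :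
  I \subset J -> lam_orth_part Delta lam J C -> lam_orth_part Delta lam I (C :&: I).
Proof.
move=> IJ [CJ Clam CJC]; split=> [|i|i j]; first exact: subsetIr.
  by rewrite inE => /andP[/Clam].
rewrite !inE => /andP[iC _] /andP[CIj jI]; apply: (CJC i j iC).
by rewrite !inE (subsetP IJ) // andbT; apply: contra CIj => ->.
Qed.

Lemma lam_connected_orth_part0 {J C : {set 'I_r}} :
  lam_connected Delta lam J -> lam_orth_part Delta lam J C -> C = set0.
Proof.
move=> Jcon [CJ Clam CJC]; apply/eqP/set0Pn => -[i iC]; apply: Jcon.
exists (fun v => v = lam \/ exists2 j, j \in J :\: C & v = Delta j).
exists (fun v => exists2 j, j \in C & v = Delta j).
split=> [|||a b].
- by exists lam; left.
- by exists (Delta i), i.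
- move=> v; split.
    case=> [->|[j jJ ->]]; first by left; left.
    have [jC|jC] := boolP (j \in C); first by right; exists j.
    by left; right; exists j; rewrite // !inE jC.
  case=> [[->|[j]]|[j jC ->]]; first by left.
    by rewrite inE => /andP[_ jJ] ->; right; exists j.
  by right; exists j; rewrite // (subsetP CJ).
- by move=> [->|[j jJC ->]] [k kC ->]; [apply: Clam | apply: CJC].
Qed.

Lemma orth_parts_lam_connected {J : {set 'I_r}} : lam != 0 ->
  (forall C, lam_orth_part Delta lam J C -> C = set0) -> lam_connected Delta lam J.
Proof.
move=> lam0 noparts.
suff lamA : forall A B : 'rV[R]_n -> Prop, A lam -> (exists y, B y) ->
    (forall v, (v = lam \/ exists2 i, i \in J & v = Delta i) <-> A v \/ B v) ->
    (forall a b, A a -> B b -> dot a b = 0) -> False.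
  move=> [A [B [[x Ax] [y By] cover orth]]].
  have [lamA'|lamB] := (cover lam).1 (or_introl erefl).
    by apply: (lamA A B lamA') => //; exists y.
  apply: (lamA B A lamB); first by exists x.
    by move=> v; rewrite cover; split=> -[]; auto.
  by move=> a b Ba Ab; rewrite dotC; apply: orth.
move=> A B Alam [y By] cover orth.
pose C := [set j in J | `[< B (Delta j) >]].
have Cpart : lam_orth_part Delta lam J C.
  split=> [|i|i j]; first by apply/subsetP => j; rewrite inE => /andP[].
    by rewrite inE => /andP[_ /asboolP]; apply: orth.
  rewrite !inE => /andP[_ /asboolP Bi] /andP[nCj jJ].
  have nBj : ~ B (Delta j) by move=> /asboolP Bj; move: nCj; rewrite jJ Bj.
  have [Aj|//] := (cover (Delta j)).1 (or_intror (ex_intro2 _ _ j jJ erefl)).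
  exact: orth.
have C0 := noparts C Cpart.
have [ylam|[j jJ yj]] := (cover y).2 (or_intror By).
  by move: (orth lam y Alam By); rewrite ylam => /eqP; rewrite dotxx_eq0 (negPf lam0).
suff : j \in C by rewrite C0 inE.
by rewrite inE jJ; apply/asboolP; rewrite -yj.
Qed.

End OrthogonalParts.

Section ObtuseBasis.
Context {R : realFieldType} {n r : nat} {Delta : 'I_r -> 'rV[R]_n} {u m : 'I_r -> R}.
Hypotheses (Delta_obtuse : forall i j, i != j -> dot (Delta j) (Delta i) <= 0)
  (dot_rho_gt0 : forall i, 0 < dot (\sum_j u j *: Delta j) (Delta i)).

Lemma lam_orth_part_eq0 (a : R) {J C : {set 'I_r}} :
  lam_orth_part Delta (\sum_j m j *: Delta j) J C ->
  (forall j, j \in C -> u j <= a * m j) ->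
  (forall j, j \notin J -> a * m j <= u j) -> C = set0.
Proof.
move=> [CJ Clam CJC] uC uJ.
pose e j := if j \in C then a * m j - u j else 0.
pose D := \sum_j e j *: Delta j.
have e_ge0 j : 0 <= e j by rewrite /e; case: ifP => // /uC; rewrite subr_ge0.
have rho_le i : i \in C -> dot (\sum_j u j *: Delta j) (Delta i) <= - dot D (Delta i).
  move=> iC.
  have -> : - dot D (Delta i) =
      a * dot (\sum_j m j *: Delta j) (Delta i) - dot D (Delta i).
    by rewrite Clam // mulr0 add0r.
  rewrite !dot_suml mulr_sumr -sumrB; apply: ler_sum => j _.
  rewrite !dotZl mulrA -mulrBl /e; case: ifP => jC.
    by rewrite opprB addrC subrK.
  rewrite subr0; have [jJ|jJ] := boolP (j \in J).
    by rewrite CJC ?mulr0 // !inE jC jJ.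
  rewrite ler_wnM2r ?uJ // Delta_obtuse //.
  by apply: contraNneq jJ => <-; apply: (subsetP CJ).
have rho_D_le : \sum_i e i * dot (\sum_j u j *: Delta j) (Delta i) <= - dot D D.
  rewrite {2}/D dot_sumr -sumrN; apply: ler_sum => i _; rewrite dotZr -mulrN.
  have [iC|iC] := boolP (i \in C); last by rewrite /e (negPf iC) !mul0r.
  by rewrite ler_wpM2l ?rho_le.
have D0 : D = 0.
  apply/eqP; rewrite -dotxx_eq0 eq_le dotxx_ge0 andbT -oppr_ge0.
  apply: le_trans rho_D_le; apply: sumr_ge0 => i _.
  by rewrite mulr_ge0 ?e_ge0 ?ltW.
apply/setP => i; rewrite inE; apply/negP => iC.
by have := rho_le i iC; rewrite D0 dot0l oppr0 leNgt dot_rho_gt0.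
Qed.

End ObtuseBasis.

Section IotaThreshold.
Context {R : realFieldType} {r : nat} {u m : 'I_r -> R} {I : {set 'I_r}}.

Lemma le_a_iota j : 0 < m j -> j \notin I -> u j <= a_iota u m I * m j.
Proof.
move=> mj0 jI; rewrite -ler_pdivrMr //.
exact: (le_bigmax_cond _ (P := fun i => i \notin I)).
Qed.

Lemma a_iota_le j : 0 < m j -> j \notin I_iota u m I -> a_iota u m I * m j <= u j.
Proof.
move=> mj0; rewrite !inE negb_or => /andP[jI].
by rewrite jI /= -leNgt ler_pdivlMr.
Qed.

End IotaThreshold.

Theorem proposition5p2 (R : realFieldType) (n r : nat)
  (Sigma Splus : seq 'rV[R]_n) (Delta : 'I_r -> 'rV[R]_n)
  (mult : 'rV[R]_n -> nat) (lam : 'rV[R]_n) (u m : 'I_r -> R)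
  (I : {set 'I_r}) :
  is_root_system Sigma ->
  is_base Sigma Delta ->
  is_positive_system Sigma Splus Delta ->
  (forall a, a \in Sigma -> (0 < mult a)%N) ->
  (forall a b, a \in Sigma -> b \in Sigma -> mult (refl a b) = mult b) ->
  \sum_(a <- Splus) (mult a)%:R *: a = \sum_i u i *: Delta i ->
  (forall i, 0 < u i) ->
  lam = \sum_i m i *: Delta i ->
  (forall i, 0 < m i) ->
  (forall i, 0 <= dot lam (Delta i)) ->
  I \proper [set: 'I_r] ->
  lam_connected Delta lam I ->
  lam_connected Delta lam (I_iota u m I) /\
  (forall J : {set 'I_r}, I_iota u m I \subset J -> lam_connected Delta lam J).
Proof.
move=> Sigma_roots Delta_base Splus_pos mult_gt0 mult_refl rhoE _ lamE m_gt0 _.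
move=> /properP[_ [k _ _]] Icon.
have [_ Delta_free _] := Delta_base.
have lam0 : lam != 0 by rewrite lamE (sum_coef_neq0 Delta_free m k) ?lt0r_neq0.
have Delta_obtuse := dot_Delta_le0 Sigma_roots Delta_base Splus_pos.
have rho_gt0 i : 0 < dot (\sum_j u j *: Delta j) (Delta i).
  rewrite -rhoE.
  exact: (dot_rho_Delta_gt0 Sigma_roots Delta_base Splus_pos mult_gt0 mult_refl).
have connected (J : {set 'I_r}) : I_iota u m I \subset J -> lam_connected Delta lam J.
  move=> IJ; apply: orth_parts_lam_connected lam0 _ => C CJ.
  have IJ' : I \subset J := subset_trans (subsetUl _ _) IJ.
  have CI0 := lam_connected_orth_part0 Icon (lam_orth_partI IJ' CJ).
  rewrite lamE in CJ; apply: (lam_orth_part_eq0 Delta_obtuse rho_gt0 (a_iota u m I) CJ).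
  - move=> j jC; apply: le_a_iota => //.
    by apply/negP => jI; have := in_set0 j; rewrite -CI0 inE jC jI.
  - by move=> j jJ; apply: a_iota_le; last by apply: contra jJ; apply: (subsetP IJ).
by split; [apply: connected | exact: connected].
Qed.
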